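(* Let $m\geq 2$ and $n\geq 3$ be integers and let $M$ be the adjacency matrix of the oriented Dutch windmill graph $D^m_n$. Then the Drazin inverse of $M$ is $$M^D=\frac{1}{m}M^{n-1}.$$ Moreover, the only nonzero entries of $M^D$ are equal to $\frac1m$, and they occur precisely at the positions $(i,j)$ satisfying one of the following: (1) $i=1$ and $j=(k-1)(n-1)+n$ for some $k\in\{1,\ldots,m\}$; (2) $i=(k-1)(n-1)+2$ and $j=1$ for some $k\in\{1,\ldots,m\}$; (3) $i=(k-1)(n-1)+\ell$ and $j=i-1$ for some $k\in\{1,\ldots,m\}$ and $\ell\in\{3,\ldots,n\}$; (4) $i=(k-1)(n-1)+\ell$ and $j=(r-1)(n-1)+(\ell-1)$ for some distinct $k,r\in\{1,\ldots,m\}$ and some $\ell\in\{3,\ldots,n\}$. These positions correspond exactly to the ordered pairs of vertices $(i,j)$ such that there is a walk of length $n-1$ from $i$ to $j$ in $D^m_n$.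
   Context: For integers $m\geq 1$, $n\geq 3$, the oriented Dutch windmill graph $D^m_n$ is the directed graph with vertex set $V=\{1,2,\ldots,m(n-1)+1\}$ whose directed edges $(a,b)$ are exactly: $(1,(k-1)(n-1)+2)$ for $k\in\{1,\ldots,m\}$; $((k-1)(n-1)+i,(k-1)(n-1)+i+1)$ for $k\in\{1,\ldots,m\}$ and $i\in\{2,\ldots,n-1\}$; and $((k-1)(n-1)+n,1)$ for $k\in\{1,\ldots,m\}$. (Thus it consists of $m$ directed $n$-cycles sharing the vertex $1$.) Its adjacency matrix $M=(a_{ij})$ is the real $(m(n-1)+1)\times(m(n-1)+1)$ matrix with $a_{ij}=1$ if $(i,j)$ is an edge and $a_{ij}=0$ otherwise. A walk is a sequence of vertices $\langle v_1,\ldots,v_r\rangle$ in which each $(v_t,v_{t+1})$ is an edge; its length is $r-1$. The Drazin inverse of a square matrix $A$ is the unique matrix $X$ with $A^{k+1}X=A^k$, $XAX=X$, $AX=XA$ for some nonnegative integer $k$; the least such $k$ is the Drazin index $\operatorname{ind}(A)$. *)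

From mathcomp Require Import all_boot all_order all_algebra.
Set Implicit Arguments. Unset Strict Implicit. Unset Printing Implicit Defensive.
Import Order.TTheory GRing.Theory Num.Theory.
Local Open Scope ring_scope.

(* Number of vertices of D^m_n : m(n-1)+1.  Vertex labels are the naturals
   1 .. m(n-1)+1; the matrix index i : 'I_(m*(n-1)).+1 stands for vertex i+1. *)

Definition dw_edge (m n a b : nat) : bool :=
  [|| [exists k : 'I_m.+1, (1 <= k)%N && (a == 1)%N
                             && (b == (k - 1) * (n - 1) + 2)%N],
      [exists k : 'I_m.+1, exists i : 'I_n,
          [&& (1 <= k)%N, (2 <= i)%N,
              (a == (k - 1) * (n - 1) + i)%N
            & (b == (k - 1) * (n - 1) + i + 1)%N]]
    | [exists k : 'I_m.+1, (1 <= k)%N && (a == (k - 1) * (n - 1) + n)%N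
                             && (b == 1)%N]].

Definition dw_adj (R : nzRingType) (m n : nat) : 'M[R]_((m * (n - 1)).+1) :=
  \matrix_(i, j) (dw_edge m n i.+1 j.+1)%:R.

Definition dw_walk (m n L a b : nat) : Prop :=
  exists s : seq nat,
    [/\ (1 <= a <= m * (n - 1) + 1)%N, size s = L,
        path (dw_edge m n) a s & last a s = b].

Definition is_drazin_inverse (T : nzRingType) (A X : T) : Prop :=
  exists k : nat, [/\ A ^+ k.+1 * X = A ^+ k, X * A * X = X & A * X = X * A].

Definition dw_pos (m n i j : nat) : Prop :=
  (exists k, [/\ (1 <= k <= m)%N, i = 1%N & j = ((k - 1) * (n - 1) + n)%N]) \/
  (exists k, [/\ (1 <= k <= m)%N, i = ((k - 1) * (n - 1) + 2)%N & j = 1%N]) \/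
  (exists k l, [/\ (1 <= k <= m)%N, (3 <= l <= n)%N,
                   i = ((k - 1) * (n - 1) + l)%N & j = (i - 1)%N]) \/
  (exists k r l, [/\ (1 <= k <= m)%N && (1 <= r <= m)%N, k <> r, (3 <= l <= n)%N,
                     i = ((k - 1) * (n - 1) + l)%N
                   & j = ((r - 1) * (n - 1) + (l - 1))%N]).

From mathcomp Require Import all_boot all_order all_algebra.
From mathcomp Require Import zify.
Import Order.TTheory GRing.Theory Num.Theory.

(* Give the hub level 0 and the i-th vertex of each blade level i, so that
   every edge raises the level by one modulo n.  A non-hub vertex has a unique
   successor, while the successors of the hub are the m vertices of level 1.
   Hence the row of a vertex v in M^(n-1) is the indicator of the level just
   below that of v, cyclically: the walk from v reaches the hub after
   n - level v steps and then spreads over a whole level.  M maps each level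
   indicator to the next one, except that the indicator of level n - 1 goes to
   m times the hub, so M^n multiplies every level indicator by m and
   M^(2n-1) = m M^(n-1).  This makes M^(n-1)/m a Drazin inverse of M, and
   Drazin inverses are unique.  As M is nonnegative, an entry of M^(n-1) is
   nonzero exactly when a walk of length n - 1 joins the two vertices. *)

Set Implicit Arguments.
Unset Strict Implicit.

Section DrazinInverse.
Local Open Scope ring_scope.

Lemma drazin_inverse_exp (K : fieldType) (T : algType K) (A : T) (c : K) k :
  c != 0 -> A ^+ k.*2.+1 = c *: A ^+ k -> is_drazin_inverse A (c^-1 *: A ^+ k).
Proof.
move=> c_neq0 cycleA; have expA : A ^+ k.+1 * A ^+ k = c *: A ^+ k.
  by rewrite -exprD addSn addnn.
exists k; split.
- by rewrite -(@scalerAr _ T) expA scalerA mulVf // scale1r.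
- by rewrite -!(@scalerAl _ T) -(@scalerAr _ T) -exprSr expA !scalerA -mulrA mulVf // mulr1.
- by rewrite -(@scalerAr _ T) -(@scalerAl _ T) -exprS -exprSr.
Qed.

Variables (T : nzRingType) (A : T).

Lemma drazin_mul_exp X : X * A * X = X -> A * X = X * A ->
  forall j, A * X = A ^+ j.+1 * X ^+ j.+1.
Proof.
move=> XAX AX; have AXX : A * (X * X) = X by rewrite mulrA AX XAX.
elim=> [|j ->]; first by rewrite !expr1.
have -> : A ^+ j.+2 * X ^+ j.+2 = A ^+ j.+1 * (A * (X * X)) * X ^+ j.
  by rewrite exprSr !exprS !mulrA.
by rewrite AXX -mulrA -exprS.
Qed.

(* [A * X] is the identity on [A ^+ j] for large [j] on both sides, so two
   Drazin inverses give the same idempotent [A * X]. *)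
Lemma drazin_inverse_unique X Y :
  is_drazin_inverse A X -> is_drazin_inverse A Y -> X = Y.
Proof.
have absorb Z W : is_drazin_inverse A Z -> is_drazin_inverse A W ->
    A * Z = A * W * (A * Z) /\ A * Z = A * Z * (A * W).
  move=> [_ [_ ZAZ AZ]] [k [AkW _ AW]].
  have comW : GRing.comm W (A ^+ k.+1) by apply: commrX.
  have comZ : GRing.comm (A ^+ k.+1) (Z ^+ k.+1).
    by apply/commr_sym/commrX/commr_sym/commrX.
  have AWl : A * W * A ^+ k.+1 = A ^+ k.+1.
    by rewrite -mulrA comW AkW -exprS.
  have AWr : A ^+ k.+1 * (A * W) = A ^+ k.+1.
    by rewrite AW mulrA AkW -exprSr.
  rewrite (drazin_mul_exp ZAZ AZ k) mulrA AWl; split=> //.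
  by rewrite comZ -mulrA AWr.
move=> DX DY; have [_ XY] := absorb _ _ DX DY; have [YX _] := absorb _ _ DY DX.
have AXY : A * X = A * Y by rewrite XY -YX.
case: DX DY => ? [_ XAX AX] [? [_ YAY AY]].
by rewrite -[LHS]XAX -mulrA AXY mulrA -AX AXY AY YAY.
Qed.

End DrazinInverse.

Section AdjacencyWalks.
Local Open Scope ring_scope.
Variables (R : numDomainType) (k : nat) (e : rel nat).
Hypothesis e_src : forall a b, e a b -> (0 < a <= k.+1)%N.
Let A : 'M[R]_k.+1 := \matrix_(i, j) (e i.+1 j.+1)%:R.

Lemma adj_exp_ge0 t i j : 0 <= (A ^+ t) i j.
Proof.
elim: t i j => [|t IHt] i j; first by rewrite expr0 mxE ler0n.
by rewrite exprSr -mulmxE mxE sumr_ge0 // => c _; rewrite mulr_ge0 // mxE ler0n.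
Qed.

Lemma adj_exp_neq0 t (i j : 'I_k.+1) :
  (A ^+ t) i j != 0 <-> exists s, [/\ size s = t, path e i.+1 s & last i.+1 s = j.+1].
Proof.
elim: t j => [|t IHt] j.
  rewrite expr0 mxE pnatr_eq0 eqb0 negbK; split=> [/eqP <-|]; first by exists [::].
  by case=> s [/size0nil -> _ [/val_inj ->]].
rewrite exprSr -mulmxE mxE psumr_neq0 => [|c _]; last first.
  by rewrite mulr_ge0 ?adj_exp_ge0 // mxE ler0n.
split.
- case/hasP=> c _ /=; rewrite mxE; case edge_cj: (e _ _); last by rewrite mulr0 ltxx.
  rewrite mulr1 => /lt0r_neq0/IHt[s [size_s path_s last_s]].
  by exists (rcons s j.+1); rewrite size_rcons rcons_path last_rcons path_s last_s size_s.
- case=> s []; case/lastP: s => [//|s x]; rewrite size_rcons rcons_path last_rcons.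
  move=> [size_s] /andP[path_s edge_x] x_j; subst x.
  have /andP[v_gt0 v_le] := e_src edge_x.
  have v_lt : ((last i.+1 s).-1 < k.+1)%N by lia.
  apply/hasP; exists (Ordinal v_lt); first exact: mem_index_enum.
  rewrite /= mxE prednK // edge_x mulr1 lt0r adj_exp_ge0 andbT.
  by apply/IHt; exists s; rewrite prednK.
Qed.

End AdjacencyWalks.

Lemma sum1_modn_eq d c m : c < d -> \sum_(i < m * d | i %% d == c) 1 = m.
Proof.
move=> c_lt_d; elim: m => [|m IHm]; first by rewrite big_ord0.
rewrite mulSn big_split_ord /= -[in RHS]IHm -[RHS]add1n; congr (_ + _).
  rewrite (eq_bigl (fun i : 'I_d => i == c :> nat)) ?(big_ord1_eq _ (fun=> 1)) ?c_lt_d // => i.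
  by rewrite modn_small.
by apply: eq_bigl => i; rewrite modnDl.
Qed.

Section WindmillVertices.
Variables m n : nat.
Hypothesis n_gt1 : 1 < n.

(* The hub is vertex 1, of level 0; vertex [b * (n - 1) + l + 1] with
   [0 < l < n] is the vertex of level [l] on blade [b] (counted from 0).
   [dw_blade] is meaningless on the hub. *)
Definition dw_level v := if v is w.+2 then (w %% (n - 1)).+1 else 0.
Definition dw_blade v := (v - 2) %/ (n - 1).
Definition dw_next v := if dw_level v == n - 1 then 1 else v.+1.
Definition dw_prev_level l := if l is l'.+1 then l' else n - 1.

Lemma dw_vertexE v : 1 < v ->
  v = dw_blade v * (n - 1) + dw_level v + 1 /\ 0 < dw_level v < n.
Proof.
case: v => [|[|w]] // _; rewrite /dw_blade /dw_level subn2 /=.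
have := divn_eq w (n - 1); have : w %% (n - 1) < n - 1 by rewrite ltn_pmod ?subn_gt0.
lia.
Qed.

Lemma dw_level_lt v : dw_level v < n.
Proof.
case: v => [|[|w]] /=; [lia | lia |].
by have := ltn_pmod w (ltac:(lia) : 0 < n - 1); lia.
Qed.

Lemma dw_vertex_uniq v b l : v = b * (n - 1) + l + 1 -> 0 < l < n ->
  dw_level v = l /\ dw_blade v = b.
Proof.
move=> -> l_bd; have -> : b * (n - 1) + l + 1 = (b * (n - 1) + l.-1).+2 by lia.
rewrite /dw_blade /dw_level subn2 modnMDl divnMDl ?subn_gt0 // modn_small ?divn_small; lia.
Qed.

Lemma dw_level_eq0 v : (dw_level v == 0) = (v <= 1).
Proof. by case: v => [|[|]]. Qed.

Lemma dw_vertex_range v : 1 < v -> (v <= (m * (n - 1)).+1) = (dw_blade v < m).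
Proof.
move=> v_gt1; have [vE l_bd] := dw_vertexE v_gt1.
apply/idP/idP => [v_le|b_lt]; last nia.
rewrite ltnNge; apply/negP => m_le; have : m * (n - 1) <= dw_blade v * (n - 1) by exact: leq_mul.
nia.
Qed.

Lemma dw_level_succ v : 1 < v ->
  dw_level v.+1 = if dw_level v == n - 1 then 1 else (dw_level v).+1.
Proof.
move=> v_gt1; have [vE l_bd] := dw_vertexE v_gt1.
case: eqP => l_eq.
  by have [] := @dw_vertex_uniq v.+1 (dw_blade v).+1 1 _ _; [lia | nia | lia].
by have [] := @dw_vertex_uniq v.+1 (dw_blade v) (dw_level v).+1 _ _; lia.
Qed.

Lemma dw_level_succ_eq v l : 0 < l < n - 1 -> (dw_level v.+1 == l.+1) = (dw_level v == l).
Proof.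
move=> l_bd; case: v => [|[|v]]; first by case: l l_bd.
  by rewrite /= mod0n eqSS.
rewrite dw_level_succ //; case: (dw_level v.+2 =P n - 1) => [->|_]; last by rewrite eqSS.
by rewrite eqSS; apply/eqP/eqP; lia.
Qed.

Lemma dw_edgeE a b : dw_edge m n a b =
  (0 < a <= (m * (n - 1)).+1) &&
  (if a == 1 then (b <= (m * (n - 1)).+1) && (dw_level b == 1) else b == dw_next a).
Proof.
apply/idP/idP.
- case/or3P.
  + case/existsP=> k /andP[/andP[k_ge1 /eqP a_eq] /eqP b_eq]; subst a.
    have [lb _] := @dw_vertex_uniq b (k - 1) 1 ltac:(lia) ltac:(lia).
    rewrite /= lb eqxx andbT; have := ltn_ord k; nia.
  + case/existsP=> k /existsP[i /and4P[k_ge1 i_ge2 /eqP a_eq /eqP b_eq]].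
    have := ltn_ord i; have := ltn_ord k => k_le i_lt.
    have [la _] := @dw_vertex_uniq a (k - 1) (i - 1) ltac:(lia) ltac:(lia).
    rewrite /dw_next la ifF; last lia.
    rewrite ifF; [apply/andP; split; apply/eqP|]; nia.
  + case/existsP=> k /andP[/andP[k_ge1 /eqP a_eq] /eqP b_eq].
    have := ltn_ord k => k_le.
    have [la _] := @dw_vertex_uniq a (k - 1) (n - 1) ltac:(lia) ltac:(lia).
    rewrite /dw_next la eqxx ifF; [apply/andP; split; apply/eqP|]; nia.
- case/andP=> a_range; case: eqP => [a_eq|/eqP a_neq1].
  + case/andP=> b_le /eqP lb.
    have b_gt1 : 1 < b by rewrite ltnNge -dw_level_eq0 lb.
    have [bE _] := dw_vertexE b_gt1.
    have kb : dw_blade b < m by rewrite -dw_vertex_range.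
    apply/or3P/Or31/existsP; exists (Ordinal (kb : (dw_blade b).+1 < m.+1)).
    rewrite /= a_eq; apply/andP; split; apply/eqP; lia.
  + have a_gt1 : 1 < a by lia.
    have [aE la] := dw_vertexE a_gt1.
    have ka : dw_blade a < m by rewrite -dw_vertex_range //; lia.
    move/eqP; rewrite /dw_next; case: ifP => [/eqP la_eq|/eqP la_neq] b_eq.
    * apply/or3P/Or33/existsP; exists (Ordinal (ka : (dw_blade a).+1 < m.+1)).
      rewrite /=; apply/andP; split; apply/eqP; lia.
    * apply/or3P/Or32/existsP; exists (Ordinal (ka : (dw_blade a).+1 < m.+1)).
      have li : (dw_level a).+1 < n by lia.
      apply/existsP; exists (Ordinal li).
      rewrite /=; apply/and3P; split; try apply/eqP; lia.
Qed.

Lemma dw_posE a b : 0 < a <= (m * (n - 1)).+1 -> 0 < b <= (m * (n - 1)).+1 ->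
  dw_pos m n a b <-> dw_level b = dw_prev_level (dw_level a).
Proof.
move=> a_range b_range; split.
- case=> [[k [k_bd -> ->]]|[[k [k_bd -> ->]]|[[k [l [k_bd l_bd a_eq ->]]]|]]].
  + by have [-> _] := @dw_vertex_uniq ((k - 1) * (n - 1) + n) (k - 1) (n - 1)
      ltac:(lia) ltac:(lia).
  + by have [-> _] := @dw_vertex_uniq ((k - 1) * (n - 1) + 2) (k - 1) 1
      ltac:(lia) ltac:(lia).
  + have [-> _] := @dw_vertex_uniq a (k - 1) (l - 1) ltac:(lia) ltac:(lia).
    have [-> _] := @dw_vertex_uniq (a - 1) (k - 1) (l - 2) ltac:(lia) ltac:(lia).
    by have -> : l - 1 = (l - 2).+1 by lia.
  + case=> k [r [l [/and3P[k_bd r_gt0 r_le] _ l_bd a_eq b_eq]]].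
    have [-> _] := @dw_vertex_uniq a (k - 1) (l - 1) ltac:(lia) ltac:(lia).
    have [-> _] := @dw_vertex_uniq b (r - 1) (l - 2) ltac:(lia) ltac:(lia).
    by have -> : l - 1 = (l - 2).+1 by lia.
- move=> lb; have [a_eq|a_neq1] := eqVneq a 1.
    rewrite a_eq /= in lb.
    have b_gt1 : 1 < b by rewrite ltnNge -dw_level_eq0 lb; lia.
    have [bE _] := dw_vertexE b_gt1.
    have kb : dw_blade b < m by rewrite -dw_vertex_range //; lia.
    left; exists (dw_blade b).+1; split; lia.
  have a_gt1 : 1 < a by lia.
  have [aE la] := dw_vertexE a_gt1.
  have ka : dw_blade a < m by rewrite -dw_vertex_range //; lia.
  have [la1|la_gt1] := eqVneq (dw_level a) 1.
    have b_eq : b = 1 by move: lb (dw_level_eq0 b); rewrite la1 /= => ->; lia.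
    by right; left; exists (dw_blade a).+1; split; lia.
  have b_gt1 : 1 < b by rewrite ltnNge -dw_level_eq0 lb; case: (dw_level a) la la_gt1 => [|[|]].
  have [bE lb_bd] := dw_vertexE b_gt1.
  have kb : dw_blade b < m by rewrite -dw_vertex_range //; lia.
  have lb' : dw_level b = (dw_level a).-1 by rewrite lb; case: (dw_level a) la.
  right; right; have [kab|kab] := eqVneq (dw_blade a) (dw_blade b).
    by left; exists (dw_blade a).+1, (dw_level a).+1; split; lia.
  by right; exists (dw_blade a).+1, (dw_blade b).+1, (dw_level a).+1; split; lia.
Qed.

End WindmillVertices.

Section WindmillPowers.
Local Open Scope ring_scope.
Variables (R : nzRingType) (m n : nat).
Hypothesis n_gt1 : (1 < n)%N.
Local Notation N := (m * (n - 1))%N.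
Local Notation M := (dw_adj R m n).

Definition dw_indicator_row (P : pred nat) : 'rV[R]_N.+1 := \row_j (P j.+1)%:R.
Definition dw_level_row p := dw_indicator_row (fun v => dw_level n v == p).

Lemma dw_indicator_row_mul P :
  dw_indicator_row P *m M = \row_j (\sum_(i < N.+1 | P i.+1 && dw_edge m n i.+1 j.+1) 1)%:R.
Proof.
apply/rowP=> j; rewrite !mxE natr_sum [RHS]big_mkcond; apply: eq_bigr => i _.
by rewrite !mxE -natrM mulnb; case: (_ && _).
Qed.

Lemma dw_level_row0 : dw_level_row 0%N = dw_indicator_row (pred1 1%N).
Proof. by apply/rowP=> j; rewrite !mxE dw_level_eq0 ltnS leqn0. Qed.

Lemma dw_level_count p : (0 < p < n)%N ->
  (\sum_(i < N.+1 | dw_level n i.+1 == p) 1 = m)%N.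
Proof.
move=> p_bd; rewrite big_mkcond big_ord_recl /= ifF; last by apply/eqP; lia.
rewrite -[RHS](@sum1_modn_eq (n - 1) p.-1 m); last by lia.
rewrite add0n [RHS]big_mkcond; apply: eq_bigr => i _; rewrite add0n.
by case: p p_bd => // p _; rewrite eqSS.
Qed.

Lemma dw_level_row_mul p : (p < n - 1)%N -> dw_level_row p *m M = dw_level_row p.+1.
Proof.
move=> p_lt; rewrite dw_indicator_row_mul; apply/rowP=> j; rewrite !mxE; congr _%:R.
have i_lt (i : 'I_N.+1) : (0 < i.+1 <= N.+1)%N by rewrite ltn_ord.
case: p p_lt => [|p] p_lt.
  rewrite (eq_bigl (fun i : 'I_N.+1 => (dw_level n j.+1 == 1%N) && (i == 0%N :> nat))) => [|i].
    by rewrite (big_ord1_cond_eq _ (fun=> 1%N) (fun=> dw_level n j.+1 == 1%N)); case: (_ == 1%N).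
  rewrite dw_edgeE // i_lt dw_level_eq0 ltnS leqn0 andbC.
  by case: i => -[|i] ? /=; rewrite ?andbF ?ltn_ord.
rewrite (eq_bigl (fun i : 'I_N.+1 =>
    (dw_level n i.+1 == p.+1) && (0 < j)%N && (i == j.-1 :> nat))) => [|i]; last first.
  rewrite dw_edgeE // i_lt; case: eqP => // li; rewrite andTb.
  have i_gt0 : (0 < i)%N by move: li; case: (nat_of_ord i).
  rewrite /dw_next li !ifF; try by apply/eqP; lia.
  by apply/eqP/andP => [|[? /eqP]]; lia.
rewrite (big_ord1_cond_eq _ (fun=> 1%N) (fun i => (dw_level n i.+1 == p.+1) && (0 < j)%N)).
have [->|j_gt0] := posnP j; first by rewrite andbF.
rewrite (leq_ltn_trans (leq_pred j) (ltn_ord j)) prednK // andbT.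
by rewrite dw_level_succ_eq //; case: (_ == _).
Qed.

Lemma dw_level_row_last_mul : dw_level_row (n - 1)%N *m M = m%:R *: dw_level_row 0%N.
Proof.
rewrite dw_indicator_row_mul; apply/rowP=> j; rewrite !mxE -natrM; congr _%:R.
rewrite (eq_bigl (fun i : 'I_N.+1 => (dw_level n i.+1 == n - 1)%N && (j == 0%N :> nat))) => [|i].
  rewrite dw_level_eq0 ltnS leqn0; case: (nat_of_ord j == 0%N); last first.
    by rewrite big_pred0 ?muln0 // => i; rewrite andbF.
  by under eq_bigl do rewrite andbT; rewrite dw_level_count ?muln1 //; lia.
rewrite dw_edgeE // ltn_ord andbT; case: eqP => // li; rewrite andTb.
have i_gt0 : (0 < i)%N by move: li; case: (nat_of_ord i) => //=; lia.
by rewrite /dw_next li eqxx ifF //; apply/eqP; lia.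
Qed.

Lemma dw_indicator_row1_mul v : (1 < v <= N.+1)%N ->
  dw_indicator_row (pred1 v) *m M = dw_indicator_row (pred1 (dw_next n v)).
Proof.
move=> v_bd; rewrite dw_indicator_row_mul; apply/rowP=> j; rewrite !mxE; congr _%:R.
rewrite (eq_bigl (fun i : 'I_N.+1 => (j.+1 == dw_next n v) && (i == v.-1 :> nat))) => [|i].
  rewrite (big_ord1_cond_eq _ (fun=> 1%N) (fun=> j.+1 == dw_next n v)).
  have -> : (v.-1 < N.+1)%N by lia.
  by rewrite /=; case: (_ == _).
rewrite /=; case: (i.+1 =P v) => [iv|iv].
  rewrite -iv dw_edgeE // ltn_ord ifF ?eqxx ?andbT //; apply/eqP; lia.
by rewrite (_ : (i == v.-1 :> nat) = false) ?andbF //; apply/eqP; lia.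
Qed.

Lemma dw_level_row_mul_exp p k : (p + k < n)%N ->
  dw_level_row p *m M ^+ k = dw_level_row (p + k)%N.
Proof.
elim: k => [|k IHk] lt_pk; first by rewrite expr0 mulmx1 addn0.
by rewrite exprSr -mulmxE mulmxA IHk ?dw_level_row_mul ?addnS //; lia.
Qed.

Lemma dw_level_row_cycle p : (p < n)%N -> dw_level_row p *m M ^+ n = m%:R *: dw_level_row p.
Proof.
move=> p_lt; rewrite [X in _ ^+ X](_ : n = (n - 1 - p) + 1 + p)%N; last by lia.
rewrite !exprD expr1 -!mulmxE !mulmxA dw_level_row_mul_exp; last by lia.
rewrite (_ : p + (n - 1 - p) = n - 1)%N; last by lia.
by rewrite dw_level_row_last_mul -scalemxAl dw_level_row_mul_exp.
Qed.

Lemma dw_indicator_row1_mul_exp v : (1 < v <= N.+1)%N ->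
  dw_indicator_row (pred1 v) *m M ^+ (n - dw_level n v) = dw_level_row 0%N.
Proof.
suff walk d u : (1 < u <= N.+1)%N -> (dw_level n u + d = n - 1)%N ->
    dw_indicator_row (pred1 u) *m M ^+ d.+1 = dw_level_row 0%N.
  move=> v_bd; have /andP[v_gt1 _] := v_bd; have [_ lv] := dw_vertexE n_gt1 v_gt1.
  by rewrite (_ : n - dw_level n v = (n - 1 - dw_level n v).+1)%N ?(walk _ v) //; lia.
elim: d u => [|d IHd] u /andP[u_gt1 u_le] lu.
  by rewrite expr1 dw_indicator_row1_mul ?u_gt1 // /dw_next ifT ?dw_level_row0 //; apply/eqP; lia.
have [uE lu_bd] := dw_vertexE n_gt1 u_gt1.
have ku : (dw_blade n u < m)%N by rewrite -dw_vertex_range.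
rewrite exprS -mulmxE mulmxA dw_indicator_row1_mul ?u_gt1 // /dw_next ifF; last by apply/eqP; lia.
apply: IHd; first by apply/andP; split; nia.
by rewrite dw_level_succ // ifF; [lia | apply/eqP; lia].
Qed.

Lemma row_dw_adj_exp (i : 'I_N.+1) :
  row i (M ^+ (n - 1)) = dw_level_row (dw_prev_level n (dw_level n i.+1)).
Proof.
have ei : 'e_i = dw_indicator_row (pred1 i.+1) by apply/rowP=> j; rewrite !mxE eqxx /= eqSS.
rewrite rowE ei; have [i0|i_gt0] := posnP i.
  by rewrite i0 -dw_level_row0 dw_level_row_mul_exp ?add0n //; lia.
have v_bd : (1 < i.+1 <= N.+1)%N by rewrite ltnS i_gt0 ltn_ord.
have [_ /andP[lv_gt0 lv_lt]] := dw_vertexE n_gt1 (i_gt0 : 1 < i.+1)%N.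
rewrite [X in _ ^+ X](_ : n - 1 = (n - dw_level n i.+1) + (dw_level n i.+1).-1)%N; last by lia.
rewrite exprD -mulmxE mulmxA dw_indicator_row1_mul_exp // dw_level_row_mul_exp ?add0n; last by lia.
by case: (dw_level n i.+1) lv_gt0.
Qed.

Lemma dw_adj_exp_entry (i j : 'I_N.+1) :
  (M ^+ (n - 1)) i j = (dw_level n j.+1 == dw_prev_level n (dw_level n i.+1))%:R.
Proof. by have /rowP/(_ j) := row_dw_adj_exp i; rewrite !mxE. Qed.

Lemma dw_adj_exp_cycle : M ^+ (n - 1).*2.+1 = m%:R *: M ^+ (n - 1).
Proof.
rewrite (_ : (n - 1).*2.+1 = n - 1 + n)%N ?exprD; last by lia.
apply/row_matrixP=> i; rewrite -mulmxE row_mul row_dw_adj_exp dw_level_row_cycle.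
  by rewrite -row_dw_adj_exp; apply/rowP=> j; rewrite !mxE.
by have := dw_level_lt n_gt1 i.+1; case: (dw_level n i.+1) => /= [|l]; lia.
Qed.

End WindmillPowers.

Local Open Scope ring_scope.

Lemma dw_walkE (R : numDomainType) m n t (i j : 'I_(m * (n - 1)).+1) : (1 < n)%N ->
  dw_walk m n t i.+1 j.+1 <-> (dw_adj R m n ^+ t) i j != 0.
Proof.
move=> n_gt1; have src a b : dw_edge m n a b -> (0 < a <= (m * (n - 1)).+1)%N.
  by rewrite dw_edgeE // => /andP[].
rewrite (adj_exp_neq0 R src); split=> [[s [_ walk]]|[s [? ? ?]]]; first by exists s.
by exists s; split=> //; have := ltn_ord i; lia.
Qed.

Unset Implicit Arguments.

Theorem theorem3p3 (R : realFieldType) (m n : nat) :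
  (2 <= m)%N -> (3 <= n)%N ->
  let M := dw_adj R m n in
  let MD := (m%:R)^-1 *: M ^+ (n - 1) in
  [/\ (forall X, is_drazin_inverse M X <-> X = MD),
      (forall i j, MD i j != 0 -> MD i j = (m%:R)^-1),
      (forall i j, MD i j != 0 <-> dw_pos m n i.+1 j.+1)
    & (forall i j : 'I_((m * (n - 1)).+1), dw_pos m n i.+1 j.+1 <-> dw_walk m n (n - 1) i.+1 j.+1)].
Proof.
move=> m_ge2 n_ge3 M MD; have n_gt1 : (1 < n)%N by lia.
have m_neq0 : m%:R != 0 :> R by rewrite pnatr_eq0; lia.
have DMD : is_drazin_inverse M MD.
  exact: drazin_inverse_exp m_neq0 (dw_adj_exp_cycle R m n_gt1).
have MD_entry i j :
    MD i j = (m%:R)^-1 * (dw_level n j.+1 == dw_prev_level n (dw_level n i.+1))%:R.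
  by rewrite mxE dw_adj_exp_entry.
have posE (i j : 'I_(m * (n - 1)).+1) :
    dw_pos m n i.+1 j.+1 <-> dw_level n j.+1 = dw_prev_level n (dw_level n i.+1).
  by apply: dw_posE; rewrite ?ltn_ord.
split=> [X | i j | i j | i j].
- by split=> [DX|->]; first exact: drazin_inverse_unique DX DMD.
- by rewrite MD_entry; case: (dw_level n j.+1 == _); rewrite ?mulr1 ?mulr0 ?eqxx.
- rewrite posE MD_entry mulf_eq0 invr_eq0 (negbTE m_neq0) pnatr_eq0 eqb0 negbK.
  by split=> /eqP.
- rewrite posE (dw_walkE R) // dw_adj_exp_entry // pnatr_eq0 eqb0 negbK.
  by split=> /eqP.
Qed.
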